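(* Let $S\subseteq\mathbb{N}^{\mathbb{N}}$. Then $S$ is $0$th-order guessable if and only if $S\in\mathbf{\Delta}^0_2$; and for every integer $m>0$, $S$ is $m$th-order guessable if and only if $S\in\mathbf{\Delta}^0_{m+1}$.
   Context: Baire space $\mathbb{N}^{\mathbb{N}}$ carries the product of discrete topologies; $\mathbf{\Sigma}^0_n,\mathbf{\Pi}^0_n,\mathbf{\Delta}^0_n$ are the boldface Borel pointclasses. $\mathbb{N}^{<\mathbb{N}}$ is the set of finite sequences of naturals. The language $\mathscr{L}_{\max}$ is the first-order language (with equality) having: a constant symbol $\overline{n}$ for each $n\in\mathbb{N}$; an $n$-ary function symbol $\tilde w$ for each $w:\mathbb{N}^n\to\mathbb{N}$; an $n$-ary predicate symbol $\tilde p$ for each $p\subseteq\mathbb{N}^n$; a special unary function symbol $\mathbf{f}$; and, for every $n$ and every $G:\mathbb{N}^n\times\mathbb{N}^{<\mathbb{N}}\to\mathbb{N}$, an $(n+1)$-ary function symbol $G\circ\mathbf{f}$. For $f\in\mathbb{N}^{\mathbb{N}}$, $\mathscr{M}_f$ is the structure with universe $\mathbb{N}$ interpreting $\overline n$ as $n$, $\tilde w$ as $w$, $\tilde p$ as $p$, $\mathbf f$ as $f$, and $G\circ\mathbf f$ as $(m_1,\dots,m_n,m)\mapsto G(m_1,\dots,m_n,f(0),\dots,f(m))$. For a sentence $\phi$, $f(\phi)=1$ if $\mathscr{M}_f\models\phi$ and $f(\phi)=0$ otherwise. Formula classes: ''quantifier-free'' means containing no quantifiers at all (not even bounded ones). $\Sigma_0=\Pi_0=\Delta_0$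 is the set of quantifier-free formulas; $\Sigma_{n+1}=\{\exists x\,\phi:\phi\in\Pi_n\}$ and $\Pi_{n+1}=\{\forall x\,\phi:\phi\in\Sigma_n\}$; a formula is $\Delta_{n+1}$ if it is equivalent, in every structure $\mathscr{M}_f$ ($f\in\mathbb{N}^{\mathbb{N}}$), to some $\Sigma_{n+1}$ formula of $\mathscr{L}_{\max}$ and also to some $\Pi_{n+1}$ formula of $\mathscr{L}_{\max}$. For a set $\Sigma$ of symbols of $\mathscr{L}_{\max}$, a sentence ''of $\mathscr{L}_{\max}\cap\Sigma$'' is an $\mathscr{L}_{\max}$-sentence all of whose non-logical symbols lie in $\Sigma$. Definition ($m$th-order guessable): $S\subseteq\mathbb{N}^{\mathbb{N}}$ is $m$th-order guessable if there exist a countable set $\Sigma$ of $\mathscr{L}_{\max}$-symbols, a listing $\phi_0,\phi_1,\dots$ of all $\Delta_m$ sentences of $\mathscr{L}_{\max}\cap\Sigma$, and a function $G:\{0,1\}^{<\mathbb{N}}\to\mathbb{N}$ such that for every $f:\mathbb{N}\to\mathbb{N}$, $\lim_{n\to\infty}G(f(\phi_0),\dots,f(\phi_n))$ equals $1$ if $f\in S$ and $0$ if $f\notin S$. *)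

From Stdlib Require Import Arith List Fin ClassicalEpsilon.
Import ListNotations.

Definition Baire := nat -> nat.
Definition BSet := Baire -> Prop.

Definition open_set (X : BSet) : Prop :=
  forall f, X f -> exists n, forall g, (forall i, i < n -> g i = f i) -> X g.

(** [BSigma n X] : X is in boldface Sigma^0_n (n >= 1; level 0 is unused).
    Sigma^0_1 = open; Sigma^0_{n+1} = countable unions of Pi^0_n sets;
    Pi^0_n = complements of Sigma^0_n sets. *)
Fixpoint BSigma (n : nat) (X : BSet) : Prop :=
  match n with
  | 0 => False
  | S n' =>
      match n' with
      | 0 => open_set X
      | S _ => exists A : nat -> BSet,
                 (forall k, BSigma n' (fun g => ~ A k g)) /\
                 (forall g, X g <-> exists k, A k g)
      end
  end.

Definition BPi (n : nat) (X : BSet) : Prop := BSigma n (fun g => ~ X g).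
Definition BDelta (n : nat) (X : BSet) : Prop := BSigma n X /\ BPi n X.

Definition vec (n : nat) := Fin.t n -> nat.

Inductive symbol : Type :=
| SyConst (k : nat)
| SyFun (n : nat) (w : vec n -> nat)
| SyPred (n : nat) (p : vec n -> Prop)
| Syf
| SyG (n : nat) (G : vec n -> list nat -> nat).           (* G ∘ f, (n+1)-ary *)

Inductive term : Type :=
| tvar (i : nat)
| tconst (k : nat)
| tfun (n : nat) (w : vec n -> nat) (args : Fin.t n -> term)
| tf (t : term)
| tG (n : nat) (G : vec n -> list nat -> nat) (args : Fin.t n -> term) (t : term).

Inductive formula : Type :=
| fEq (t1 t2 : term)
| fPred (n : nat) (p : vec n -> Prop) (args : Fin.t n -> term)
| fNot (φ : formula)
| fAnd (φ ψ : formula)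
| fOr (φ ψ : formula)
| fImp (φ ψ : formula)
| fEx (x : nat) (φ : formula)
| fAll (x : nat) (φ : formula).

Definition upd (env : nat -> nat) (x a : nat) : nat -> nat :=
  fun y => if Nat.eqb y x then a else env y.

Fixpoint teval (f : Baire) (env : nat -> nat) (t : term) : nat :=
  match t with
  | tvar i => env i
  | tconst k => k
  | tfun n w args => w (fun i => teval f env (args i))
  | tf t => f (teval f env t)
  | tG n G args t =>
      G (fun i => teval f env (args i)) (map f (seq 0 (S (teval f env t))))
  end.

Fixpoint sat (f : Baire) (env : nat -> nat) (φ : formula) : Prop :=
  match φ with
  | fEq t1 t2 => teval f env t1 = teval f env t2
  | fPred n p args => p (fun i => teval f env (args i))
  | fNot φ => ~ sat f env φ
  | fAnd φ ψ => sat f env φ /\ sat f env ψ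
  | fOr φ ψ => sat f env φ \/ sat f env ψ
  | fImp φ ψ => sat f env φ -> sat f env ψ
  | fEx x φ => exists a, sat f (upd env x a) φ
  | fAll x φ => forall a, sat f (upd env x a) φ
  end.

Fixpoint tfree (x : nat) (t : term) : Prop :=
  match t with
  | tvar i => i = x
  | tconst _ => False
  | tfun n _ args => exists i, tfree x (args i)
  | tf t => tfree x t
  | tG n _ args t => (exists i, tfree x (args i)) \/ tfree x t
  end.

Fixpoint ffree (x : nat) (φ : formula) : Prop :=
  match φ with
  | fEq t1 t2 => tfree x t1 \/ tfree x t2
  | fPred _ _ args => exists i, tfree x (args i)
  | fNot φ => ffree x φ
  | fAnd φ ψ | fOr φ ψ | fImp φ ψ => ffree x φ \/ ffree x ψ
  | fEx y φ | fAll y φ => y <> x /\ ffree x φ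
  end.

Definition sentence (φ : formula) : Prop := forall x, ~ ffree x φ.

Fixpoint tsyms_in (Sg : symbol -> Prop) (t : term) : Prop :=
  match t with
  | tvar _ => True
  | tconst k => Sg (SyConst k)
  | tfun n w args => Sg (SyFun n w) /\ forall i, tsyms_in Sg (args i)
  | tf t => Sg Syf /\ tsyms_in Sg t
  | tG n G args t => Sg (SyG n G) /\ (forall i, tsyms_in Sg (args i)) /\ tsyms_in Sg t
  end.

Fixpoint fsyms_in (Sg : symbol -> Prop) (φ : formula) : Prop :=
  match φ with
  | fEq t1 t2 => tsyms_in Sg t1 /\ tsyms_in Sg t2
  | fPred n p args => Sg (SyPred n p) /\ forall i, tsyms_in Sg (args i)
  | fNot φ => fsyms_in Sg φ
  | fAnd φ ψ | fOr φ ψ | fImp φ ψ => fsyms_in Sg φ /\ fsyms_in Sg ψ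
  | fEx _ φ | fAll _ φ => fsyms_in Sg φ
  end.

Fixpoint qfree (φ : formula) : Prop :=
  match φ with
  | fEq _ _ | fPred _ _ _ => True
  | fNot φ => qfree φ
  | fAnd φ ψ | fOr φ ψ | fImp φ ψ => qfree φ /\ qfree ψ
  | fEx _ _ | fAll _ _ => False
  end.

Fixpoint isSigma (n : nat) (φ : formula) : Prop :=
  match n with
  | 0 => qfree φ
  | S n' => match φ with fEx _ ψ => isPi n' ψ | _ => False end
  end
with isPi (n : nat) (φ : formula) : Prop :=
  match n with
  | 0 => qfree φ
  | S n' => match φ with fAll _ ψ => isSigma n' ψ | _ => False end
  end.

Definition equiv_all (φ ψ : formula) : Prop :=
  forall f env, sat f env φ <-> sat f env ψ.

Definition isDelta (m : nat) (φ : formula) : Prop :=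
  match m with
  | 0 => qfree φ
  | S _ => (exists ψ, isSigma m ψ /\ equiv_all φ ψ) /\
           (exists ψ, isPi m ψ /\ equiv_all φ ψ)
  end.

Definition env0 : nat -> nat := fun _ => 0.

Definition fval (f : Baire) (φ : formula) : bool :=
  if excluded_middle_informative (sat f env0 φ) then true else false.

Definition countable_syms (Sg : symbol -> Prop) : Prop :=
  exists e : nat -> symbol, forall s, Sg s -> exists k, e k = s.

Definition guessable (m : nat) (X : BSet) : Prop :=
  exists (Sg : symbol -> Prop) (phi : nat -> formula) (G : list bool -> nat),
    countable_syms Sg /\
    (forall k, isDelta m (phi k) /\ sentence (phi k) /\ fsyms_in Sg (phi k)) /\
    (forall ψ, isDelta m ψ -> sentence ψ -> fsyms_in Sg ψ -> exists k, phi k = ψ) /\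
    (forall f : Baire,
       let v := fun n => G (map (fun k => fval f (phi k)) (seq 0 (S n))) in
       (X f -> exists N, forall n, N <= n -> v n = 1) /\
       (~ X f -> exists N, forall n, N <= n -> v n = 0)).

(** Both directions go through the
    correspondence "[Delta_m] sentences of [L_max] <-> [Delta^0_(max m 1)] sets".

    - Guessable => Borel.  A [Sigma_(r+1)] sentence defines a [Sigma^0_(r+1)]
      set (quantifier-free sentences define clopen sets, since a term only
      reads a finite prefix of [f]).  The guess at stage [n] is a boolean
      combination of finitely many [Delta^0_(max m 1)] sets, so [X], the set
      where the guesses are eventually [1], and its complement, where they are
      eventually [0], are both [Sigma^0_(max m 1 + 1)].
    - Borel => guessable.  Write [X = U_k /\_l P k l] and its complement as
      [U_k /\_l Q k l] with [Delta^0_(max m 1)] pieces, and let [approx n] say that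
      the least candidate index surviving the first [n+1] tests is a
      [P]-candidate; [approx n] converges pointwise to [X].  Each [approx n]
      is defined by a [Delta_m] sentence: by a normal form theorem using one
      symbol [G o f] when [m > 0], and by a quantifier-free sentence reading a
      prefix of [f] when [m = 0].  Listing these sentences at the even
      positions among an enumeration of all [Delta_m] sentences over the
      (countable) symbol set used, the guesser just reads the last even
      position. *)

From Stdlib Require Import Arith List Lia Classical FunctionalExtensionality
  PropExtensionality ClassicalEpsilon Cantor.
Import ListNotations.

Lemma fin_bound n (P : Fin.t n -> nat -> Prop) :
  (forall i N N', N <= N' -> P i N -> P i N') ->
  (forall i, exists N, P i N) -> exists M, forall i, P i M.
Proof.
  revert P; induction n as [|n IH]; intros P Hmono Hex.
  - exists 0. intros i. inversion i.
  - destruct (IH (fun i => P (Fin.FS i))) as [M HM]; [intros; eapply Hmono; eauto| auto|].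
    destruct (Hex Fin.F1) as [M1 HM1].
    exists (max M M1). intros i. pattern i. apply Fin.caseS'.
    + eapply Hmono; [|exact HM1]. lia.
    + intros p. eapply Hmono; [|exact (HM p)]. lia.
Qed.

Lemma witness_bound (Q : nat -> nat -> Prop) k :
  (forall i, i < k -> exists j, Q i j) -> exists M, forall i, i < k -> exists j, j <= M /\ Q i j.
Proof.
  induction k as [|k IH]; intros H.
  - exists 0; intros; lia.
  - destruct IH as [M HM]; [intros; apply H; lia|]. destruct (H k) as [j Hj]; [lia|].
    exists (max M j). intros i Hi. destruct (Nat.eq_dec i k) as [->|Hne].
    + exists j; split; auto; lia.
    + destruct (HM i) as [j' [Hj' HQ]]; [lia|]. exists j'; split; auto; lia.
Qed.

Lemma least_witness (P : nat -> Prop) n : P n -> exists i, P i /\ forall i', i' < i -> ~ P i'.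
Proof.
  induction n as [n IH] using (well_founded_induction lt_wf). intros Hn.
  destruct (classic (exists i', i' < n /\ P i')) as [[i' [Hlt Hi']]|Hno].
  - exact (IH i' Hlt Hi').
  - exists n. split; auto. intros i' Hi' Hp. apply Hno; eauto.
Qed.

Definition agree (N : nat) (g f : Baire) : Prop := forall i, i < N -> g i = f i.

Lemma agree_mono N N' g f : N <= N' -> agree N' g f -> agree N g f.
Proof. intros HN H i Hi. apply H. lia. Qed.

Lemma prefix_agree (f g : Baire) k : agree k g f ->
  map g (seq 0 k) = map f (seq 0 k).
Proof. intros H. apply map_ext_in. intros a Ha. apply in_seq in Ha. apply H; lia. Qed.

Lemma prefix_eq_agree (f g : Baire) k s : map g (seq s k) = map f (seq s k) ->
  forall i, s <= i < s + k -> g i = f i.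
Proof.
  revert s; induction k as [|k IH]; intros s H i Hi; [lia|]. simpl in H. injection H as H1 H2.
  destruct (Nat.eq_dec i s) as [->|Hne]; auto. apply (IH (S s)); auto; lia.
Qed.

Lemma nth_map_seq {A} (h : nat -> A) n i d : i < n -> nth i (map h (seq 0 n)) d = h i.
Proof.
  intros Hi. rewrite nth_indep with (d' := h 0) by (rewrite length_map, length_seq; lia).
  rewrite map_nth, seq_nth by lia. reflexivity.
Qed.

(** ** Closure properties of the boldface classes *)

Lemma BSigma_ext n (X Y : BSet) : (forall g, X g <-> Y g) -> BSigma n X -> BSigma n Y.
Proof.
  intros H. replace Y with X; auto.
  apply functional_extensionality; intros g; apply propositional_extensionality; auto.
Qed.

Lemma BSigma_SS j X : BSigma (S (S j)) X <-> exists A : nat -> BSet,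
  (forall k, BSigma (S j) (fun g => ~ A k g)) /\ (forall g, X g <-> exists k, A k g).
Proof. reflexivity. Qed.

Lemma BSigma_union2 j X Y :
  BSigma (S j) X -> BSigma (S j) Y -> BSigma (S j) (fun g => X g \/ Y g).
Proof.
  destruct j.
  - simpl. intros HX HY f [Hf|Hf].
    + destruct (HX f Hf) as [n Hn]. exists n; intros g Hg; left; auto.
    + destruct (HY f Hf) as [n Hn]. exists n; intros g Hg; right; auto.
  - rewrite !BSigma_SS. intros [A [HA HXA]] [B [HB HYB]].
    exists (fun k => let '(a, b) := Cantor.of_nat k in if a =? 0 then A b else B b).
    split.
    + intros k. destruct (Cantor.of_nat k) as [a b]. destruct (a =? 0); auto.
    + intros g. rewrite HXA, HYB. split.
      * intros [[k Hk]|[k Hk]]; [exists (Cantor.to_nat (0, k))|exists (Cantor.to_nat (1, k))];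
          rewrite Cantor.cancel_of_to; exact Hk.
      * intros [k Hk]. destruct (Cantor.of_nat k) as [a b]. destruct (a =? 0); eauto.
Qed.

Lemma BSigma_inter2 j X Y :
  BSigma (S j) X -> BSigma (S j) Y -> BSigma (S j) (fun g => X g /\ Y g).
Proof.
  destruct j.
  - simpl. intros HX HY f [Hf1 Hf2].
    destruct (HX f Hf1) as [n Hn]. destruct (HY f Hf2) as [m Hm].
    exists (max n m); intros g Hg; split; [apply Hn|apply Hm]; intros i Hi; apply Hg; lia.
  - rewrite !BSigma_SS. intros [A [HA HXA]] [B [HB HYB]].
    exists (fun k g => let '(a, b) := Cantor.of_nat k in A a g /\ B b g). split.
    + (* the complement of [A a /\ B b] is a union of two [Pi^0_(j+1)]-complements *)
      intros k. destruct (Cantor.of_nat k) as [a b].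
      eapply BSigma_ext; [|exact (BSigma_union2 _ _ _ (HA a) (HB b))]. intros g; simpl; tauto.
    + intros g. rewrite HXA, HYB. split.
      * intros [[a Ha] [b Hb]]. exists (Cantor.to_nat (a, b)). rewrite Cantor.cancel_of_to. auto.
      * intros [k Hk]. destruct (Cantor.of_nat k) as [a b]. destruct Hk; eauto.
Qed.

Lemma BSigma_countable_union j (A : nat -> BSet) :
  (forall n, BSigma (S j) (A n)) -> BSigma (S j) (fun g => exists n, A n g).
Proof.
  destruct j.
  - simpl. intros H f [n Hn]. destruct (H n f Hn) as [N HN]. exists N. intros g Hg. exists n. auto.
  - intros H. setoid_rewrite BSigma_SS in H. destruct (choice _ H) as [B HB].
    apply BSigma_SS. exists (fun k => let '(a, b) := Cantor.of_nat k in B a b). split.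
    + intros k. destruct (Cantor.of_nat k) as [a b]. apply (proj1 (HB a)).
    + intros g. split.
      * intros [n Hn]. apply (proj2 (HB n)) in Hn. destruct Hn as [k Hk].
        exists (Cantor.to_nat (n, k)). rewrite Cantor.cancel_of_to. auto.
      * intros [k Hk]. destruct (Cantor.of_nat k) as [a b]. exists a. apply (proj2 (HB a)). eauto.
Qed.

Lemma BSigma_true_false j : BSigma (S j) (fun _ => True) /\ BSigma (S j) (fun _ => False).
Proof.
  induction j as [|j [HT HF]].
  - simpl. split; intros f Hf; [exists 0; auto | destruct Hf].
  - split; apply BSigma_SS.
    + exists (fun _ _ => True). split; [|firstorder].
      intros k. eapply BSigma_ext; [|exact HF]. simpl; tauto.
    + exists (fun _ _ => False). split; [|firstorder].
      intros k. eapply BSigma_ext; [|exact HT]. simpl; tauto.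
Qed.

Lemma BDelta_ext n X Y : (forall g, X g <-> Y g) -> BDelta n X -> BDelta n Y.
Proof.
  intros H [H1 H2]. split; eapply BSigma_ext; eauto. intros g; simpl; rewrite H; tauto.
Qed.

Lemma BDelta_not j X : BDelta (S j) X -> BDelta (S j) (fun g => ~ X g).
Proof. intros [H1 H2]. split; auto. eapply BSigma_ext; [|exact H1]. intros; tauto. Qed.

Lemma BDelta_and j X Y :
  BDelta (S j) X -> BDelta (S j) Y -> BDelta (S j) (fun g => X g /\ Y g).
Proof.
  intros [H1 H2] [H3 H4]. split; [now apply BSigma_inter2|].
  eapply BSigma_ext; [|exact (BSigma_union2 _ _ _ H2 H4)]. intros g; simpl; tauto.
Qed.

Lemma BDelta_or j X Y :
  BDelta (S j) X -> BDelta (S j) Y -> BDelta (S j) (fun g => X g \/ Y g).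
Proof.
  intros HX HY. eapply BDelta_ext; [|exact (BDelta_not _ _ (BDelta_and _ _ _
    (BDelta_not _ _ HX) (BDelta_not _ _ HY)))]. intros g; simpl; tauto.
Qed.

Lemma BDelta_const j (P : Prop) : BDelta (S j) (fun _ => P).
Proof.
  destruct (BSigma_true_false j) as [HT HF]. destruct (classic P) as [HP|HP]; split.
  - eapply BSigma_ext; [|exact HT]; simpl; tauto.
  - eapply BSigma_ext; [|exact HF]; simpl; tauto.
  - eapply BSigma_ext; [|exact HF]; simpl; tauto.
  - eapply BSigma_ext; [|exact HT]; simpl; tauto.
Qed.

Lemma BDelta_forall_lt j (A : nat -> BSet) n : (forall i, BDelta (S j) (A i)) ->
  BDelta (S j) (fun g => forall i, i < n -> A i g).
Proof.
  intros H. induction n as [|n IH].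
  - eapply BDelta_ext; [|apply (BDelta_const j True)]. intros g; split; auto; intros; lia.
  - eapply BDelta_ext; [|exact (BDelta_and _ _ _ IH (H n))]. intros g; split.
    + intros [H1 H2] i Hi. destruct (Nat.eq_dec i n) as [->|Hne]; auto. apply H1; lia.
    + intros H1; split; auto.
Qed.

Lemma BDelta_exists_le j (A : nat -> BSet) n : (forall i, BDelta (S j) (A i)) ->
  BDelta (S j) (fun g => exists i, i <= n /\ A i g).
Proof.
  intros H. eapply BDelta_ext;
    [|exact (BDelta_not _ _ (BDelta_forall_lt j _ (S n) (fun i => BDelta_not _ _ (H i))))].
  intros g. split.
  - intros Hn. apply NNPP. intros Hno. apply Hn. intros i Hi HA. apply Hno. exists i; split; auto; lia.
  - intros [i [Hi HA]] Hall. apply (Hall i); auto; lia.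
Qed.

Lemma prefix_clopen k (P : list nat -> Prop) : BDelta 1 (fun f => P (map f (seq 0 k))).
Proof.
  split; simpl; intros f Hf; exists k; intros g Hg; rewrite (prefix_agree f g k Hg); auto.
Qed.

Lemma open_as_prefixes (U : BSet) : open_set U ->
  exists H : list nat -> Prop, forall f, U f <-> exists j, H (map f (seq 0 (S j))).
Proof.
  intros HU. exists (fun l => forall g, map g (seq 0 (length l)) = l -> U g).
  intros f. split.
  - intros Hf. destruct (HU f Hf) as [N HN]. exists N. intros g Hg.
    rewrite length_map, length_seq in Hg. apply HN. intros i Hi.
    apply (prefix_eq_agree f g (S N) 0 Hg). lia.
  - intros [j Hj]. apply Hj. rewrite length_map, length_seq. reflexivity.
Qed.

Lemma closed_as_prefixes X : BSigma 1 (fun g => ~ X g) ->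
  exists H : list nat -> Prop, forall f, X f <-> forall j, ~ H (map f (seq 0 (S j))).
Proof.
  intros HU. destruct (open_as_prefixes _ HU) as [H HH]. exists H. intros f. split.
  - intros Hf j Hj. apply (proj2 (HH f)); eauto.
  - intros Hj. apply NNPP. intros Hn. apply HH in Hn. destruct Hn as [j Hn]. exact (Hj j Hn).
Qed.

Lemma BSigma_of_BPi j Y : BSigma (S j) (fun g => ~ Y g) -> BSigma (S (S j)) Y.
Proof. intros H. apply BSigma_SS. exists (fun _ => Y). split; auto. firstorder. Qed.

Lemma BSigma_succ j Y : BSigma (S j) Y -> BSigma (S (S j)) Y.
Proof.
  revert Y; induction j as [|j IH]; intros Y HY.
  - destruct (open_as_prefixes Y HY) as [H HH]. apply BSigma_SS.
    exists (fun j f => H (map f (seq 0 (S j)))). split; auto.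
    intros k. exact (proj2 (prefix_clopen (S k) H)).
  - apply BSigma_SS in HY. destruct HY as [A [HA HYA]].
    apply BSigma_SS. exists A. split; auto.
Qed.

Lemma BPi_as_intersection r X : BSigma (S r) (fun g => ~ X g) ->
  exists C : nat -> BSet, (forall j, BDelta (S r) (C j)) /\ (forall f, X f <-> forall j, C j f).
Proof.
  destruct r; intros HX.
  - destruct (closed_as_prefixes _ HX) as [H HH].
    exists (fun j f => ~ H (map f (seq 0 (S j)))). split; auto.
    intros j. apply BDelta_not, prefix_clopen.
  - apply BSigma_SS in HX. destruct HX as [A [HA HXA]].
    exists (fun k g => ~ A k g). split.
    + intros k. split; [exact (BSigma_succ _ _ (HA k))|].
      apply BSigma_of_BPi. eapply BSigma_ext; [|exact (HA k)]. intros g; simpl; tauto.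
    + intros f. split.
      * intros Hf k Hk. apply (proj2 (HXA f)); eauto.
      * intros Hk. apply NNPP. rewrite HXA. intros [k Hf]. exact (Hk k Hf).
Qed.

(** ** Sets defined by formulas *)

Lemma term_prefix_dependent t f env : exists N, forall g, agree N g f ->
  teval g env t = teval f env t.
Proof.
  revert f env.
  assert (Args : forall n (args : Fin.t n -> term) f env,
    (forall i, exists N, forall g, agree N g f -> teval g env (args i) = teval f env (args i)) ->
    exists N, forall g, agree N g f ->
      (fun i => teval g env (args i)) = (fun i => teval f env (args i))).
  { intros n args f env IH.
    destruct (fin_bound n (fun i N => forall g, agree N g f ->
      teval g env (args i) = teval f env (args i))) as [M HM]; auto.
    - intros i N N' HN H g Hg. apply H. eapply agree_mono; eauto.
    - exists M. intros g Hg. apply functional_extensionality. intros i. now apply HM. }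
  induction t as [i|k|n w args IH|t IH|n G args IH t IHt]; intros f env.
  - exists 0; auto.
  - exists 0; auto.
  - destruct (Args n args f env (fun i => IH i f env)) as [M HM].
    exists M. intros g Hg. simpl. now rewrite (HM g Hg).
  - (* [f t] needs the prefix read by [t] plus the argument position *)
    destruct (IH f env) as [N HN]. exists (max N (S (teval f env t))).
    intros g Hg. simpl. rewrite HN by (eapply agree_mono; [|exact Hg]; lia). apply Hg; lia.
  - (* [G o f] reads [f] up to the value of [t] *)
    destruct (Args n args f env (fun i => IH i f env)) as [M HM].
    destruct (IHt f env) as [N HN]. exists (max M (max N (S (teval f env t)))).
    intros g Hg. cbn [teval]. rewrite HN, HM by (eapply agree_mono; [|exact Hg]; lia).
    f_equal. apply prefix_agree. eapply agree_mono; [|exact Hg]; lia.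
Qed.

Lemma qfree_prefix_dependent φ f env : qfree φ -> exists N, forall g, agree N g f ->
  (sat g env φ <-> sat f env φ).
Proof.
  (* binary connectives: take the larger of the two prefix lengths *)
  assert (Bin : forall (op : Prop -> Prop -> Prop) α β,
    (forall A B A' B', (A <-> A') -> (B <-> B') -> (op A B <-> op A' B')) ->
    (exists N, forall g, agree N g f -> (sat g env α <-> sat f env α)) ->
    (exists N, forall g, agree N g f -> (sat g env β <-> sat f env β)) ->
    exists N, forall g, agree N g f -> (op (sat g env α) (sat g env β) <-> op (sat f env α) (sat f env β))).
  { intros op α β Hop [N1 H1] [N2 H2]. exists (max N1 N2). intros g Hg.
    apply (Hop _ _ _ _ (H1 g (agree_mono _ _ _ _ (Nat.le_max_l _ _) Hg))
      (H2 g (agree_mono _ _ _ _ (Nat.le_max_r _ _) Hg))). }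
  induction φ as [t1 t2|n p args|φ IH|φ IH1 ψ IH2|φ IH1 ψ IH2|φ IH1 ψ IH2|x φ IH|x φ IH];
    simpl; intros Hq; try contradiction.
  - destruct (term_prefix_dependent t1 f env) as [N1 H1].
    destruct (term_prefix_dependent t2 f env) as [N2 H2].
    exists (max N1 N2). intros g Hg. rewrite H1, H2 by (eapply agree_mono; [|exact Hg]; lia). tauto.
  - destruct (fin_bound n (fun i N => forall g, agree N g f ->
      teval g env (args i) = teval f env (args i))) as [M HM].
    + intros i N N' HN H g Hg. apply H. eapply agree_mono; eauto.
    + intros i. apply term_prefix_dependent.
    + exists M. intros g Hg.
      replace (fun i => teval g env (args i)) with (fun i => teval f env (args i)); [tauto|].
      apply functional_extensionality. intros i. symmetry. now apply HM.
  - destruct (IH Hq) as [N HN]. exists N. intros g Hg. rewrite HN; tauto.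
  - apply (Bin and); [intros; tauto|apply IH1|apply IH2]; apply Hq.
  - apply (Bin or); [intros; tauto|apply IH1|apply IH2]; apply Hq.
  - apply (Bin (fun A B => A -> B)); [intros; tauto|apply IH1|apply IH2]; apply Hq.
Qed.

Lemma qfree_clopen φ env : qfree φ -> BDelta 1 (fun f => sat f env φ).
Proof.
  intros Hq. split; simpl; intros f Hf; destruct (qfree_prefix_dependent φ f env Hq) as [N HN];
    exists N; intros g Hg; rewrite HN; auto.
Qed.

Lemma formula_sets r φ env :
  (isSigma (S r) φ -> BSigma (S r) (fun f => sat f env φ)) /\
  (isPi (S r) φ -> BPi (S r) (fun f => sat f env φ)).
Proof.
  revert φ env; induction r as [|r IH]; intros φ env; split; intros H; destruct φ;
    simpl in H; try contradiction; unfold BPi.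
  - eapply BSigma_ext; [|apply (BSigma_countable_union 0 (fun a f => sat f (upd env x a) φ))].
    + simpl; tauto.
    + intros a. exact (proj1 (qfree_clopen φ (upd env x a) H)).
  - eapply BSigma_ext; [|apply (BSigma_countable_union 0 (fun a f => ~ sat f (upd env x a) φ))].
    + intros g; simpl. split; [intros [a Ha] Hc; apply Ha, Hc|apply not_all_ex_not].
    + intros a. exact (proj2 (qfree_clopen φ (upd env x a) H)).
  - apply BSigma_SS. exists (fun a f => sat f (upd env x a) φ). split.
    + intros a. exact (proj2 (IH φ (upd env x a)) H).
    + intros g; simpl; tauto.
  - apply BSigma_SS. exists (fun a f => ~ sat f (upd env x a) φ). split.
    + intros a. eapply BSigma_ext; [|exact (proj1 (IH φ (upd env x a)) H)].
      intros g; simpl; tauto.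
    + intros g; simpl. split; [apply not_all_ex_not|intros [a Ha] Hc; apply Ha, Hc].
Qed.

Lemma fval_true f φ : fval f φ = true <-> sat f env0 φ.
Proof.
  unfold fval. destruct (excluded_middle_informative (sat f env0 φ)); split; congruence || tauto.
Qed.

Lemma delta_sentence_set m φ : isDelta m φ -> BDelta (S (pred m)) (fun f => sat f env0 φ).
Proof.
  destruct m as [|r]; simpl; [apply qfree_clopen|].
  intros [[ψ [Hψ Eψ]] [ψ' [Hψ' Eψ']]]. split.
  - eapply BSigma_ext; [|exact (proj1 (formula_sets r ψ env0) Hψ)].
    intros g; simpl; rewrite (Eψ g env0); tauto.
  - eapply BSigma_ext; [|exact (proj2 (formula_sets r ψ' env0) Hψ')].
    intros g; simpl; rewrite (Eψ' g env0); tauto.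
Qed.

(** ** Guessable sets are [Delta^0_(m+1)] *)

Lemma truth_vector_delta j (phi : nat -> formula) :
  (forall k, BDelta (S j) (fun f => sat f env0 (phi k))) ->
  forall ks (H : list bool -> Prop), BDelta (S j) (fun f => H (map (fun k => fval f (phi k)) ks)).
Proof.
  intros Hd ks. induction ks as [|k ks IH]; intros H; [exact (BDelta_const j (H []))|].
  (* split on the truth value of [phi k] *)
  eapply BDelta_ext; [|exact (BDelta_or _ _ _
      (BDelta_and _ _ _ (Hd k) (IH (fun l => H (true :: l))))
      (BDelta_and _ _ _ (BDelta_not _ _ (Hd k)) (IH (fun l => H (false :: l)))))].
  intros g. simpl. rewrite <- fval_true. destruct (fval g (phi k)); intuition congruence.
Qed.

Lemma eventually_const_sigma j (V : nat -> Baire -> nat) c :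
  (forall n (P : nat -> Prop), BDelta (S j) (fun f => P (V n f))) ->
  BSigma (S (S j)) (fun f => exists N, forall n, N <= n -> V n f = c).
Proof.
  intros HV. apply BSigma_SS. exists (fun N f => forall n, N <= n -> V n f = c). split; [|tauto].
  intros N. eapply BSigma_ext;
    [|apply (BSigma_countable_union j (fun n f => N <= n /\ V n f <> c))].
  - intros g. split; [intros [n [H1 H2]] Hc; exact (H2 (Hc n H1))|].
    intros Hn. apply NNPP. intros Hno. apply Hn. intros n Hle. apply NNPP. intros Hne.
    apply Hno. eauto.
  - intros n. exact (proj1 (BDelta_and _ _ _ (BDelta_const j (N <= n)) (HV n (fun x => x <> c)))).
Qed.

Lemma guessed_set_delta j (phi : nat -> formula) (G : list bool -> nat) (X : BSet) :
  (forall k, BDelta (S j) (fun f => sat f env0 (phi k))) ->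
  (forall f : Baire,
     let v := fun n => G (map (fun k => fval f (phi k)) (seq 0 (S n))) in
     (X f -> exists N, forall n, N <= n -> v n = 1) /\
     (~ X f -> exists N, forall n, N <= n -> v n = 0)) ->
  BDelta (S (S j)) X.
Proof.
  intros Hd Hlim.
  set (V := fun n f => G (map (fun k => fval f (phi k)) (seq 0 (S n)))).
  assert (HV : forall n (P : nat -> Prop), BDelta (S j) (fun f => P (V n f))).
  { intros n P. exact (truth_vector_delta j phi Hd (seq 0 (S n)) (fun l => P (G l))). }
  assert (Hexcl : forall f, (exists N, forall n, N <= n -> V n f = 1) ->
                            (exists N, forall n, N <= n -> V n f = 0) -> False).
  { intros f [N1 H1] [N0 H0]. specialize (H1 (max N1 N0)). specialize (H0 (max N1 N0)).
    rewrite H0 in H1 by lia. discriminate H1. lia. }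
  split.
  - eapply BSigma_ext; [|exact (eventually_const_sigma j V 1 HV)].
    intros f. split; [|apply (Hlim f)]. intros HN. apply NNPP. intros Hx.
    exact (Hexcl f HN (proj2 (Hlim f) Hx)).
  - eapply BSigma_ext; [|exact (eventually_const_sigma j V 0 HV)].
    intros f. split; [|apply (Hlim f)]. intros HN Hx. exact (Hexcl f (proj1 (Hlim f) Hx) HN).
Qed.

Lemma guessable_delta m X : guessable m X -> BDelta (S (S (pred m))) X.
Proof.
  intros [Sg [phi [G [_ [Hphi [_ Hlim]]]]]].
  apply (guessed_set_delta (pred m) phi G X); auto.
  intros k. apply delta_sentence_set, Hphi.
Qed.

Lemma even_double k : Nat.even (2 * k) = true.
Proof. now rewrite Nat.even_mul. Qed.
Lemma even_double_succ k : Nat.even (2 * k + 1) = false.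
Proof. now rewrite Nat.even_add, Nat.even_mul. Qed.
Lemma div2_double_succ k : Nat.div2 (2 * k + 1) = k.
Proof. apply Nat.div2_odd'. Qed.

(** Candidate [i] stands
    for [P (i/2)] if [i] is even and for [Q (i/2)] if [i] is odd; the
    approximation at stage [n] guesses "[f] in [X]" iff the least candidate
    passing its first [n+1] tests is even.  Eventually the least candidate
    that passes all tests is the only one left among the smaller indices. *)
Section Approximation.
Variables (X : BSet) (P Q : nat -> nat -> BSet).
Hypothesis HP : forall f, X f <-> exists k, forall l, P k l f.
Hypothesis HQ : forall f, ~ X f <-> exists k, forall l, Q k l f.

Definition candidate_test (i l : nat) : BSet :=
  if Nat.even i then P (Nat.div2 i) l else Q (Nat.div2 i) l.

Definition survives (i n : nat) (f : Baire) : Prop := forall l, l < S n -> candidate_test i l f.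

Definition approx (n : nat) (f : Baire) : Prop :=
  exists i, i <= n /\ (Nat.even i = true /\ survives i n f /\ forall i', i' < i -> ~ survives i' n f).

Lemma least_good_candidate f : exists i0, (forall l, candidate_test i0 l f) /\
  (forall i', i' < i0 -> ~ forall l, candidate_test i' l f) /\ (X f <-> Nat.even i0 = true).
Proof.
  assert (Hex : exists i, forall l, candidate_test i l f).
  { unfold candidate_test. destruct (classic (X f)) as [Hx|Hx].
    - apply HP in Hx. destruct Hx as [k Hk]. exists (2 * k). now rewrite even_double, Nat.div2_double.
    - apply HQ in Hx. destruct Hx as [k Hk]. exists (2 * k + 1).
      now rewrite even_double_succ, div2_double_succ. }
  destruct Hex as [i1 Hi1]. destruct (least_witness (fun i => forall l, candidate_test i l f) i1 Hi1) as [i0 [H0 Hlt]].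
  exists i0. split; [|split]; auto. unfold candidate_test in H0.
  destruct (Nat.even i0); split; try discriminate.
  - reflexivity.
  - intros _. apply HP. eauto.
  - intros Hx. exfalso. apply (proj2 (HQ f)); eauto.
Qed.

Lemma approx_converges f : (X f -> exists N, forall n, N <= n -> approx n f) /\
                          (~ X f -> exists N, forall n, N <= n -> ~ approx n f).
Proof.
  destruct (least_good_candidate f) as [i0 [H0 [Hlt Hdec]]].
  (* each smaller candidate fails one of its tests, all below some [M] *)
  destruct (witness_bound (fun i l => ~ candidate_test i l f) i0) as [M HM].
  { intros i Hi. apply not_all_ex_not. exact (Hlt i Hi). }
  assert (Key : forall n, max i0 M <= n -> (approx n f <-> Nat.even i0 = true)).
  { intros n Hn. assert (R0 : survives i0 n f) by (intros l _; apply H0).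
    assert (Rlt : forall i', i' < i0 -> ~ survives i' n f).
    { intros i' Hi' Hr. destruct (HM i' Hi') as [l [Hl Hfail]]. apply Hfail, Hr. lia. }
    split.
    - intros [i [Hi [He [Hr Hl]]]].
      destruct (lt_eq_lt_dec i i0) as [[Hc| ->]|Hc]; auto.
      + exfalso; exact (Rlt i Hc Hr).
      + exfalso; exact (Hl i0 Hc R0).
    - intros He. exists i0. repeat split; auto. lia. }
  split; intros Hx; exists (max i0 M); intros n Hn; rewrite (Key n Hn); now rewrite <- Hdec.
Qed.

Lemma approx_delta j : (forall k l, BDelta (S j) (P k l)) -> (forall k l, BDelta (S j) (Q k l)) ->
  forall n, BDelta (S j) (approx n).
Proof.
  intros HPd HQd n.
  assert (HC : forall i l, BDelta (S j) (candidate_test i l)).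
  { intros i l. unfold candidate_test. destruct (Nat.even i); auto. }
  assert (HR : forall i, BDelta (S j) (survives i n)).
  { intros i. exact (BDelta_forall_lt j (fun l => candidate_test i l) (S n) (HC i)). }
  apply BDelta_exists_le. intros i.
  apply BDelta_and; [apply BDelta_const|]. apply BDelta_and; auto.
  apply (BDelta_forall_lt j (fun i' f => ~ survives i' n f)). intros; now apply BDelta_not.
Qed.

Lemma approx_prefix :
  (forall k l f g, agree (S l) g f -> (P k l f <-> P k l g)) ->
  (forall k l f g, agree (S l) g f -> (Q k l f <-> Q k l g)) ->
  forall n f g, agree (S n) g f -> (approx n f <-> approx n g).
Proof.
  intros HPp HQp n f g Hfg.
  assert (HR : forall i, survives i n f <-> survives i n g).
  { intros i. unfold survives, candidate_test.
    assert (Hl : forall l, l < S n -> agree (S l) g f) by (intros l Hl; eapply agree_mono; [|exact Hfg]; lia).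
    destruct (Nat.even i); split; intros H l Hl'; specialize (H l Hl');
      first [apply (HPp _ l f g) | apply (HQp _ l f g)]; auto. }
  unfold approx. setoid_rewrite HR. reflexivity.
Qed.
End Approximation.

(** ** Defining Borel sets by sentences *)

Fixpoint qprefix (b : bool) (d r : nat) (φ : formula) : formula :=
  match r with
  | 0 => φ
  | S r' => if b then fEx d (qprefix (negb b) (S d) r' φ) else fAll d (qprefix (negb b) (S d) r' φ)
  end.

Definition G_atom (n : nat) (G : vec n -> list nat -> nat) : formula :=
  fEq (tG n G (fun i => tvar (proj1_sig (Fin.to_nat i))) (tvar n)) (tconst 0).

Definition negate_G {n} (G : vec n -> list nat -> nat) : vec n -> list nat -> nat :=
  fun v l => if G v l =? 0 then 1 else 0.

Lemma qprefix_cong f r : forall b d φ ψ env,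
  (forall env', (forall x, x < d -> env' x = env x) -> (sat f env' φ <-> sat f env' ψ)) ->
  (sat f env (qprefix b d r φ) <-> sat f env (qprefix b d r ψ)).
Proof.
  induction r as [|r IH]; intros b d φ ψ env H; [now apply H|].
  assert (E : forall a, sat f (upd env d a) (qprefix (negb b) (S d) r φ) <->
                        sat f (upd env d a) (qprefix (negb b) (S d) r ψ)).
  { intros a. apply IH. intros env' He. apply H. intros x Hx. rewrite He by lia.
    unfold upd. destruct (Nat.eqb_spec x d); [lia|reflexivity]. }
  destruct b; simpl; setoid_rewrite E; tauto.
Qed.

Lemma qprefix_negate f n (G : vec n -> list nat -> nat) r : forall b d env,
  sat f env (qprefix (negb b) d r (G_atom n (negate_G G))) <-> ~ sat f env (qprefix b d r (G_atom n G)).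
Proof.
  induction r as [|r IH]; intros b d env.
  - cbn [qprefix sat teval G_atom]. unfold negate_G. destruct (Nat.eqb_spec (G (fun i => env (proj1_sig (Fin.to_nat i)))
      (map f (seq 0 (S (env n))))) 0) as [->|Hne]; [|tauto].
    split; [discriminate|tauto].
  - destruct b; simpl.
    + pose proof (IH false) as E; simpl in E. setoid_rewrite E. firstorder.
    + pose proof (IH true) as E; simpl in E. setoid_rewrite E.
      split; [intros [a Ha] Hc; exact (Ha (Hc a))|apply not_all_ex_not].
Qed.

Lemma sigma_normal_form r : forall d n X, n = d + r -> BSigma (S r) X ->
  exists G : vec n -> list nat -> nat,
    forall f env, X f <-> sat f env (qprefix true d (S r) (G_atom n G)).
Proof.
  induction r as [|r IH]; intros d n X Hn HX.
  - (* an open set: "some prefix [f(0..x_d)] is accepted" *)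
    destruct (open_as_prefixes X HX) as [H HH].
    exists (fun _ l => if excluded_middle_informative (H l) then 0 else 1).
    intros f env. subst n. rewrite HH. simpl.
    assert (Eu : forall a, upd env d a (d + 0) = a).
    { intros a; unfold upd. rewrite Nat.add_0_r, Nat.eqb_refl. reflexivity. }
    split; intros [j Hj]; exists j; rewrite ?Eu in *;
      destruct (excluded_middle_informative _); simpl in *; auto; try discriminate; contradiction.
  - (* a union of [Pi^0_(r+1)] sets [A k]; the index [k] becomes [x_d] and
       [G] dispatches on it to the normal form of [A k] *)
    apply BSigma_SS in HX. destruct HX as [A [HA HXA]].
    assert (HPi : forall k, exists Gk : vec n -> list nat -> nat, forall f env,
               A k f <-> sat f env (qprefix false (S d) (S r) (G_atom n Gk))).
    { intros k. destruct (IH (S d) n (fun g => ~ A k g)) as [Gk HGk]; [lia|apply HA|].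
      exists (negate_G Gk). intros f env. rewrite (qprefix_negate f n Gk (S r) true (S d) env).
      rewrite <- HGk. tauto. }
    destruct (choice _ HPi) as [Gs HGs].
    assert (Hd : d < n) by lia.
    exists (fun v l => Gs (v (Fin.of_nat_lt Hd)) v l).
    intros f env. rewrite HXA.
    enough (E : forall a, A a f <-> sat f (upd env d a)
      (qprefix false (S d) (S r) (G_atom n (fun v l => Gs (v (Fin.of_nat_lt Hd)) v l)))).
    { split; intros [a Ha]; exists a; now apply E. }
    intros a. rewrite (HGs a f (upd env d a)). apply qprefix_cong. intros env' He. simpl.
    rewrite Fin.to_nat_of_nat. simpl. rewrite (He d) by lia. unfold upd. rewrite Nat.eqb_refl. tauto.
Qed.

Lemma pi_normal_form r d n X : n = d + r -> BPi (S r) X ->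
  exists G : vec n -> list nat -> nat,
    forall f env, X f <-> sat f env (qprefix false d (S r) (G_atom n G)).
Proof.
  intros Hn HX. destruct (sigma_normal_form r d n _ Hn HX) as [G HG]. exists (negate_G G).
  intros f env. rewrite (qprefix_negate f n G (S r) true d env), <- HG.
  split; [tauto|apply NNPP].
Qed.

Lemma qprefix_free x k : forall b d φ, ffree x (qprefix b d k φ) -> (x < d \/ d + k <= x) /\ ffree x φ.
Proof.
  induction k as [|k IH]; intros b d φ H; [split; auto; lia|].
  destruct b; simpl in H; destruct H as [H1 H2]; apply IH in H2; destruct H2; split; auto; lia.
Qed.

Lemma G_atom_free x n G : ffree x (G_atom n G) -> x <= n.
Proof.
  simpl. intros [[[i Hi]|Hi]|[]]; simpl in Hi; [|lia].
  pose proof (proj2_sig (Fin.to_nat i)). simpl in *. lia.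
Qed.

Lemma qprefix_sentence b r G : sentence (qprefix b 0 (S r) (G_atom r G)).
Proof.
  intros x H. apply qprefix_free in H. destruct H as [H1 H2]. apply G_atom_free in H2. lia.
Qed.

Lemma qprefix_class k : forall d φ, qfree φ -> isSigma k (qprefix true d k φ) /\ isPi k (qprefix false d k φ).
Proof. induction k as [|k IH]; intros d φ H; simpl; auto. split; apply IH; auto. Qed.

Lemma qprefix_syms Sg k : forall b d φ, fsyms_in Sg φ -> fsyms_in Sg (qprefix b d k φ).
Proof. induction k as [|k IH]; intros b d φ H; [auto|]. destruct b; simpl; auto. Qed.

Lemma delta_set_definable r D : BDelta (S r) D ->
  exists G : vec r -> list nat -> nat,
    isDelta (S r) (qprefix true 0 (S r) (G_atom r G)) /\
    (forall f, sat f env0 (qprefix true 0 (S r) (G_atom r G)) <-> D f).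
Proof.
  intros [HS HPi].
  destruct (sigma_normal_form r 0 r D eq_refl HS) as [G HG].
  destruct (pi_normal_form r 0 r D eq_refl HPi) as [G' HG'].
  exists G. split; [split|intros f; now rewrite (HG f env0)].
  - exists (qprefix true 0 (S r) (G_atom r G)). split; [apply qprefix_class; simpl; auto|].
    intros f env; tauto.
  - exists (qprefix false 0 (S r) (G_atom r G')). split; [apply qprefix_class; simpl; auto|].
    intros f env. rewrite <- HG, <- HG'. tauto.
Qed.

Definition prefix_sentence (n : nat) (H : list nat -> nat) : formula :=
  fEq (tG 0 (fun _ l => H l) (fun i => Fin.case0 (fun _ => term) i) (tconst n)) (tconst 0).

Lemma prefix_sentence_closed n H : sentence (prefix_sentence n H).
Proof. intros x. simpl. intros [[[i _]|[]]|[]]. inversion i. Qed.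

Lemma prefix_set_definable n (D : BSet) : (forall f g, agree (S n) g f -> (D f <-> D g)) ->
  exists H, forall f, sat f env0 (prefix_sentence n H) <-> D f.
Proof.
  intros HD.
  exists (fun l => if excluded_middle_informative (exists g, map g (seq 0 (S n)) = l /\ D g) then 0 else 1).
  intros f. simpl. destruct (excluded_middle_informative _) as [[g [Hg HDg]]|Hn].
  - split; auto. intros _. apply (HD g f); auto. intros x Hx.
    apply (prefix_eq_agree g f (S n) 0); auto. lia.
  - split; [discriminate|]. intros Hf. exfalso. apply Hn. eauto.
Qed.

(** ** Enumerating the formulas over a countable set of symbols *)

(** A surjection from [nat] onto lists of naturals (length, then Cantor pairs). *)
Fixpoint decode_n (len c : nat) : list nat :=
  match len with
  | 0 => []
  | S l => let '(a, b) := Cantor.of_nat c in a :: decode_n l b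
  end.
Definition decode_list (c : nat) : list nat := let '(len, r) := Cantor.of_nat c in decode_n len r.
Fixpoint encode_list (l : list nat) : nat :=
  match l with [] => 0 | a :: l' => Cantor.to_nat (a, encode_list l') end.

Lemma decode_list_surj l : exists c, decode_list c = l.
Proof.
  exists (Cantor.to_nat (length l, encode_list l)). unfold decode_list. rewrite Cantor.cancel_of_to.
  induction l as [|a l IH]; cbn [decode_n encode_list length]; auto.
  rewrite Cantor.cancel_of_to. now f_equal.
Qed.

Lemma fin_family_code {A : Type} n (F : Fin.t n -> A) (dec : nat -> A) :
  (forall i, exists c, dec c = F i) ->
  exists lc, forall i, dec (nth (proj1_sig (Fin.to_nat i)) (decode_list lc) 0) = F i.
Proof.
  intros H. destruct (choice _ H) as [h Hh].
  assert (Hl : exists l, forall i, nth (proj1_sig (Fin.to_nat i)) l 0 = h i).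
  { clear. induction n as [|n IH]; intros.
    - exists []. intros i; inversion i.
    - destruct (IH (fun i => h (Fin.FS i))) as [l Hl]. exists (h Fin.F1 :: l).
      intros i. pattern i. apply Fin.caseS'; [reflexivity|].
      intros p. specialize (Hl p). simpl. destruct (Fin.to_nat p). exact Hl. }
  destruct Hl as [l Hl]. destruct (decode_list_surj l) as [lc Hlc].
  exists lc. intros i. now rewrite Hlc, Hl.
Qed.

Definition eventually (Q : nat -> Prop) : Prop := exists F, forall fu, F <= fu -> Q fu.

Lemma eventually_and Q1 Q2 : eventually Q1 -> eventually Q2 -> eventually (fun fu => Q1 fu /\ Q2 fu).
Proof. intros [F1 H1] [F2 H2]. exists (max F1 F2). intros fu Hfu. split; [apply H1|apply H2]; lia. Qed.

Lemma eventually_fin n (Q : Fin.t n -> nat -> Prop) :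
  (forall i, eventually (Q i)) -> eventually (fun fu => forall i, Q i fu).
Proof.
  intros H. destruct (fin_bound n (fun i F => forall fu, F <= fu -> Q i fu)) as [M HM]; auto.
  - intros i N N' HN HQ fu Hfu. apply HQ. lia.
  - exists M. intros fu Hfu i. now apply HM.
Qed.

Lemma eventually_step (Q Q' : nat -> Prop) : eventually Q ->
  (forall fu, Q fu -> Q' (S fu)) -> eventually Q'.
Proof.
  intros [F HF] Hstep. exists (S F). intros [|fu] Hfu; [lia|]. apply Hstep, HF. lia.
Qed.

Section Enumeration.
Variable e : nat -> symbol.
Variable Sg : symbol -> Prop.
Hypothesis He : forall s, Sg s -> exists k, e k = s.

(** Decoding of terms, by recursion on a fuel bound; the tag of the Cantor
    pair selects the constructor and [e] decodes the symbol. *)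
Fixpoint decode_term_fuel (fu c : nat) : term :=
  match fu with
  | 0 => tvar 0
  | S fu' =>
    match Cantor.of_nat c with
    | (0, r) => tvar r
    | (1, r) => match e r with SyConst k => tconst k | _ => tvar 0 end
    | (2, r) => let '(s, lc) := Cantor.of_nat r in
                match e s with
                | SyFun n w => tfun n w (fun i =>
                    decode_term_fuel fu' (nth (proj1_sig (Fin.to_nat i)) (decode_list lc) 0))
                | _ => tvar 0 end
    | (3, r) => tf (decode_term_fuel fu' r)
    | (4, r) => let '(s, r2) := Cantor.of_nat r in let '(lc, c') := Cantor.of_nat r2 in
                match e s with
                | SyG n G => tG n G (fun i =>
                    decode_term_fuel fu' (nth (proj1_sig (Fin.to_nat i)) (decode_list lc) 0))
                    (decode_term_fuel fu' c')
                | _ => tvar 0 end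
    | _ => tvar 0
    end
  end.

Lemma decode_term_fuel_surj t : tsyms_in Sg t ->
  eventually (fun fu => exists c, decode_term_fuel fu c = t).
Proof.
  induction t as [i|k|n w args IH|t IH|n G args IH t IHt]; simpl; intros Hs.
  - exists 1. intros [|fu] Hfu; [lia|]. exists (Cantor.to_nat (0, i)). cbn [decode_term_fuel].
    now rewrite Cantor.cancel_of_to.
  - destruct (He _ Hs) as [r Hr]. exists 1. intros [|fu] Hfu; [lia|].
    exists (Cantor.to_nat (1, r)). cbn [decode_term_fuel]. now rewrite Cantor.cancel_of_to, Hr.
  - destruct Hs as [Hw Hargs]. destruct (He _ Hw) as [s Hs].
    apply (eventually_step _ _ (eventually_fin n _ (fun i => IH i (Hargs i)))).
    intros fu Hfu. destruct (fin_family_code n args (decode_term_fuel fu) Hfu) as [lc Hlc].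
    exists (Cantor.to_nat (2, Cantor.to_nat (s, lc))). cbn [decode_term_fuel].
    rewrite !Cantor.cancel_of_to, Hs. f_equal. now apply functional_extensionality.
  - apply (eventually_step _ _ (IH (proj2 Hs))). intros fu [c Hc].
    exists (Cantor.to_nat (3, c)). cbn [decode_term_fuel]. now rewrite Cantor.cancel_of_to, Hc.
  - destruct Hs as [HG [Hargs Ht]]. destruct (He _ HG) as [s Hs].
    apply (eventually_step _ _ (eventually_and _ _
      (eventually_fin n _ (fun i => IH i (Hargs i))) (IHt Ht))).
    intros fu [Hfu [c Hc]]. destruct (fin_family_code n args (decode_term_fuel fu) Hfu) as [lc Hlc].
    exists (Cantor.to_nat (4, Cantor.to_nat (s, Cantor.to_nat (lc, c)))). cbn [decode_term_fuel].
    rewrite !Cantor.cancel_of_to, Hs, Hc. f_equal. now apply functional_extensionality.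
Qed.

Definition decode_term (c : nat) : term := let '(fu, c') := Cantor.of_nat c in decode_term_fuel fu c'.

Lemma decode_code {A : Type} (dec : nat -> nat -> A) (a : A) :
  eventually (fun fu => exists c, dec fu c = a) ->
  exists c, (let '(fu, c') := Cantor.of_nat c in dec fu c') = a.
Proof.
  intros [F HF]. destruct (HF F (le_n F)) as [c Hc].
  exists (Cantor.to_nat (F, c)). now rewrite Cantor.cancel_of_to.
Qed.

Lemma decode_term_surj t : tsyms_in Sg t -> exists c, decode_term c = t.
Proof. intros Hs. exact (decode_code _ t (decode_term_fuel_surj t Hs)). Qed.

Definition formula_default : formula := fEq (tvar 0) (tvar 0).

Fixpoint decode_formula_fuel (fu c : nat) : formula :=
  match fu with
  | 0 => formula_default
  | S fu' =>
    let dec := decode_formula_fuel fu' in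
    match Cantor.of_nat c with
    | (0, r) => let '(a, b) := Cantor.of_nat r in fEq (decode_term a) (decode_term b)
    | (1, r) => let '(s, lc) := Cantor.of_nat r in
                match e s with
                | SyPred n p => fPred n p (fun i =>
                    decode_term (nth (proj1_sig (Fin.to_nat i)) (decode_list lc) 0))
                | _ => formula_default end
    | (2, r) => fNot (dec r)
    | (3, r) => let '(a, b) := Cantor.of_nat r in fAnd (dec a) (dec b)
    | (4, r) => let '(a, b) := Cantor.of_nat r in fOr (dec a) (dec b)
    | (5, r) => let '(a, b) := Cantor.of_nat r in fImp (dec a) (dec b)
    | (6, r) => let '(x, a) := Cantor.of_nat r in fEx x (dec a)
    | (7, r) => let '(x, a) := Cantor.of_nat r in fAll x (dec a)
    | _ => formula_default
    end
  end.

Lemma decode_formula_binary (op : formula -> formula -> formula) tag φ ψ :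
  (forall fu a b, decode_formula_fuel (S fu) (Cantor.to_nat (tag, Cantor.to_nat (a, b))) =
                  op (decode_formula_fuel fu a) (decode_formula_fuel fu b)) ->
  eventually (fun fu => exists c, decode_formula_fuel fu c = φ) ->
  eventually (fun fu => exists c, decode_formula_fuel fu c = ψ) ->
  eventually (fun fu => exists c, decode_formula_fuel fu c = op φ ψ).
Proof.
  intros Hop H1 H2. apply (eventually_step _ _ (eventually_and _ _ H1 H2)).
  intros fu [[a Ha] [b Hb]]. exists (Cantor.to_nat (tag, Cantor.to_nat (a, b))).
  now rewrite Hop, Ha, Hb.
Qed.

Lemma decode_formula_fuel_surj φ : fsyms_in Sg φ ->
  eventually (fun fu => exists c, decode_formula_fuel fu c = φ).
Proof.
  induction φ as [t1 t2|n p args|φ IH|φ IH1 ψ IH2|φ IH1 ψ IH2|φ IH1 ψ IH2|x φ IH|x φ IH];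
    simpl; intros Hs.
  - destruct (decode_term_surj t1 (proj1 Hs)) as [a Ha].
    destruct (decode_term_surj t2 (proj2 Hs)) as [b Hb].
    exists 1. intros [|fu] Hfu; [lia|].
    exists (Cantor.to_nat (0, Cantor.to_nat (a, b))). cbn [decode_formula_fuel].
    now rewrite !Cantor.cancel_of_to, Ha, Hb.
  - destruct Hs as [Hp Hargs]. destruct (He _ Hp) as [s Hs].
    destruct (fin_family_code n args decode_term (fun i => decode_term_surj _ (Hargs i))) as [lc Hlc].
    exists 1. intros [|fu] Hfu; [lia|].
    exists (Cantor.to_nat (1, Cantor.to_nat (s, lc))). cbn [decode_formula_fuel].
    rewrite !Cantor.cancel_of_to, Hs. f_equal. now apply functional_extensionality.
  - apply (eventually_step _ _ (IH Hs)). intros fu [c Hc].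
    exists (Cantor.to_nat (2, c)). cbn [decode_formula_fuel]. now rewrite Cantor.cancel_of_to, Hc.
  - apply (decode_formula_binary fAnd 3); [|apply IH1, Hs|apply IH2, Hs].
    intros; cbn [decode_formula_fuel]. now rewrite !Cantor.cancel_of_to.
  - apply (decode_formula_binary fOr 4); [|apply IH1, Hs|apply IH2, Hs].
    intros; cbn [decode_formula_fuel]. now rewrite !Cantor.cancel_of_to.
  - apply (decode_formula_binary fImp 5); [|apply IH1, Hs|apply IH2, Hs].
    intros; cbn [decode_formula_fuel]. now rewrite !Cantor.cancel_of_to.
  - apply (eventually_step _ _ (IH Hs)). intros fu [c Hc].
    exists (Cantor.to_nat (6, Cantor.to_nat (x, c))). cbn [decode_formula_fuel].
    now rewrite !Cantor.cancel_of_to, Hc.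
  - apply (eventually_step _ _ (IH Hs)). intros fu [c Hc].
    exists (Cantor.to_nat (7, Cantor.to_nat (x, c))). cbn [decode_formula_fuel].
    now rewrite !Cantor.cancel_of_to, Hc.
Qed.

Definition decode_formula (c : nat) : formula :=
  let '(fu, c') := Cantor.of_nat c in decode_formula_fuel fu c'.

Lemma decode_formula_surj φ : fsyms_in Sg φ -> exists c, decode_formula c = φ.
Proof. intros Hs. exact (decode_code _ φ (decode_formula_fuel_surj φ Hs)). Qed.
End Enumeration.

(** ** [Delta^0_(m+1)] sets are guessable *)

Definition good_sentence (m : nat) (Sg : symbol -> Prop) (ψ : formula) : Prop :=
  isDelta m ψ /\ sentence ψ /\ fsyms_in Sg ψ.

Lemma constants_and_range_countable (sym : nat -> symbol) :
  countable_syms (fun s => (exists k, s = SyConst k) \/ (exists n, s = sym n)).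
Proof.
  exists (fun c => match Cantor.of_nat c with (0, k) => SyConst k | (_, k) => sym k end).
  intros s [[k ->]|[k ->]]; [exists (Cantor.to_nat (0, k))|exists (Cantor.to_nat (1, k))];
    now rewrite Cantor.cancel_of_to.
Qed.

(** A listing of all good sentences having a prescribed sequence [σ] of good
    sentences at the even positions (the odd positions enumerate the rest). *)
Lemma listing_with_evens m Sg (σ : nat -> formula) : countable_syms Sg ->
  (forall n, good_sentence m Sg (σ n)) ->
  exists phi : nat -> formula, (forall k, phi (2 * k) = σ k) /\
    (forall k, good_sentence m Sg (phi k)) /\
    (forall ψ, good_sentence m Sg ψ -> exists k, phi k = ψ).
Proof.
  intros [e He] Hσ.
  set (odd_entry := fun c => if excluded_middle_informative (good_sentence m Sg (decode_formula e c))
                             then decode_formula e c else σ 0).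
  exists (fun k => if Nat.even k then σ (Nat.div2 k) else odd_entry (Nat.div2 k)).
  split; [|split].
  - intros k. now rewrite even_double, Nat.div2_double.
  - intros k. destruct (Nat.even k); auto. unfold odd_entry.
    destruct (excluded_middle_informative _); auto.
  - intros ψ Hψ. destruct (decode_formula_surj e Sg He ψ (proj2 (proj2 Hψ))) as [c Hc].
    exists (2 * c + 1). rewrite even_double_succ, div2_double_succ. unfold odd_entry. rewrite Hc.
    destruct (excluded_middle_informative _) as [_|Hn]; [reflexivity|contradiction].
Qed.

(** If good sentences [σ n] define sets [D n] converging pointwise to [X],
    then [X] is guessable: guess the truth value of the latest [σ]. *)
Lemma guessable_of_approximation m X Sg (σ : nat -> formula) (D : nat -> BSet) :
  countable_syms Sg -> (forall n, good_sentence m Sg (σ n)) ->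
  (forall n f, sat f env0 (σ n) <-> D n f) ->
  (forall f, (X f -> exists N, forall n, N <= n -> D n f) /\
             (~ X f -> exists N, forall n, N <= n -> ~ D n f)) ->
  guessable m X.
Proof.
  intros HSg Hσ HD Hconv.
  destruct (listing_with_evens m Sg σ HSg Hσ) as [phi [Heven [Hgood Hall]]].
  exists Sg, phi, (fun l => if nth (2 * Nat.div2 (pred (length l))) l false then 1 else 0).
  split; [exact HSg|]. split; [exact Hgood|]. split; [intros ψ H1 H2 H3; apply Hall; now split|].
  intros f. simpl.
  (* the guess after [n+1] values is the truth value of [σ (n/2)] *)
  assert (Hv : forall n, (if nth (2 * Nat.div2 (pred (length (map (fun k => fval f (phi k)) (seq 0 (S n))))))
                           (map (fun k => fval f (phi k)) (seq 0 (S n))) false then 1 else 0)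
                       = if fval f (σ (Nat.div2 n)) then 1 else 0).
  { intros n. rewrite length_map, length_seq. simpl pred.
    pose proof (Nat.div2_odd n). rewrite nth_map_seq by (destruct (Nat.odd n); simpl in *; lia).
    now rewrite Heven. }
  setoid_rewrite Hv.
  split; intros Hx; [destruct (proj1 (Hconv f) Hx) as [N HN]|destruct (proj2 (Hconv f) Hx) as [N HN]];
    exists (2 * N); intros n Hn; pose proof (Nat.div2_odd n);
    destruct (fval f (σ (Nat.div2 n))) eqn:E; auto; exfalso.
  - assert (Hs : ~ sat f env0 (σ (Nat.div2 n))) by (rewrite <- fval_true; congruence).
    apply Hs, HD, HN. destruct (Nat.odd n); simpl in *; lia.
  - apply fval_true in E. apply HD in E. revert E. apply HN. destruct (Nat.odd n); simpl in *; lia.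
Qed.

Lemma BDelta_decomposition j X : BDelta (S (S j)) X ->
  exists P Q : nat -> nat -> BSet,
    (forall k l, BDelta (S j) (P k l)) /\ (forall k l, BDelta (S j) (Q k l)) /\
    (forall f, X f <-> exists k, forall l, P k l f) /\ (forall f, ~ X f <-> exists k, forall l, Q k l f).
Proof.
  intros [HX HnX]. apply BSigma_SS in HX, HnX.
  destruct HX as [A [HA HXA]]. destruct HnX as [B [HB HXB]].
  destruct (choice _ (fun k => BPi_as_intersection j (A k) (HA k))) as [P HP].
  destruct (choice _ (fun k => BPi_as_intersection j (B k) (HB k))) as [Q HQ].
  exists P, Q. split; [intros k; apply HP|]. split; [intros k; apply HQ|]. split.
  - intros f. rewrite HXA. split; intros [k Hk]; exists k; now apply (proj2 (HP k)).
  - intros f. rewrite HXB. split; intros [k Hk]; exists k; now apply (proj2 (HQ k)).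
Qed.

Lemma BDelta2_prefix_decomposition X : BDelta 2 X ->
  exists HP HQ : nat -> list nat -> Prop,
    (forall f, X f <-> exists k, forall l, ~ HP k (map f (seq 0 (S l)))) /\
    (forall f, ~ X f <-> exists k, forall l, ~ HQ k (map f (seq 0 (S l)))).
Proof.
  intros [HX HnX]. apply BSigma_SS in HX, HnX.
  destruct HX as [A [HA HXA]]. destruct HnX as [B [HB HXB]].
  destruct (choice _ (fun k => closed_as_prefixes (A k) (HA k))) as [HP HHP].
  destruct (choice _ (fun k => closed_as_prefixes (B k) (HB k))) as [HQ HHQ].
  exists HP, HQ. split.
  - intros f. rewrite HXA. split; intros [k Hk]; exists k; now apply (HHP k).
  - intros f. rewrite HXB. split; intros [k Hk]; exists k; now apply (HHQ k).
Qed.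

Lemma guessable_of_BDelta j X : BDelta (S (S j)) X -> guessable (S j) X.
Proof.
  intros HX. destruct (BDelta_decomposition j X HX) as [P [Q [HPd [HQd [HP HQ]]]]].
  (* each stage [approx n] is defined by a [Delta_(j+1)] sentence with one symbol [Gs n o f] *)
  destruct (choice _ (fun n => delta_set_definable j _ (approx_delta P Q j HPd HQd n))) as [Gs HGs].
  apply (guessable_of_approximation (S j) X _ (fun n => qprefix true 0 (S j) (G_atom j (Gs n)))
           (approx P Q) (constants_and_range_countable (fun n => SyG j (Gs n)))).
  - intros n. split; [apply HGs|]. split; [apply qprefix_sentence|].
    apply qprefix_syms. simpl. split; [split; [|split]; auto|]; eauto.
  - intros n f. apply HGs.
  - exact (approx_converges X P Q HP HQ).
Qed.

Lemma guessable0_of_BDelta2 X : BDelta 2 X -> guessable 0 X.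
Proof.
  intros HX. destruct (BDelta2_prefix_decomposition X HX) as [HP [HQ [HXP HXQ]]].
  set (P := fun k l (f : Baire) => ~ HP k (map f (seq 0 (S l)))).
  set (Q := fun k l (f : Baire) => ~ HQ k (map f (seq 0 (S l)))).
  (* stage [n] only reads [f(0), ..., f(n)], so it is a quantifier-free sentence *)
  assert (Hpre : forall n f g, agree (S n) g f -> (approx P Q n f <-> approx P Q n g)).
  { apply approx_prefix; intros k l f g Hfg; unfold P, Q; now rewrite (prefix_agree f g (S l) Hfg). }
  destruct (choice _ (fun n => prefix_set_definable n _ (Hpre n))) as [Hs HHs].
  apply (guessable_of_approximation 0 X _ (fun n => prefix_sentence n (Hs n)) (approx P Q)
           (constants_and_range_countable (fun n => SyG 0 (fun _ l => Hs n l)))).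
  - intros n. split; [simpl; auto|]. split; [apply prefix_sentence_closed|].
    simpl. split; [split; [eauto|split; [intros i; inversion i|eauto]]|eauto].
  - intros n f. apply HHs.
  - exact (approx_converges X P Q HXP HXQ).
Qed.

Theorem mainTheorem1 (S : BSet) :
  (guessable 0 S <-> BDelta 2 S) /\
  (forall m : nat, 0 < m -> (guessable m S <-> BDelta (m + 1) S)).
Proof.
  split.
  - split; [apply guessable_delta|apply guessable0_of_BDelta2].
  - intros [|j] Hm; [lia|].
    replace (Datatypes.S j + 1) with (Datatypes.S (Datatypes.S j)) by lia.
    split; [apply guessable_delta|apply guessable_of_BDelta].
Qed.
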